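(* Let $\mathcal{V}$ be a finite set with $|\mathcal{V}|\ge 2$, and for a logit vector $\boldsymbol{z}\in\mathbb{R}^{|\mathcal{V}|}$ let $\pi_{\boldsymbol{z}}(a)=\frac{\exp z_a}{\sum_{a'\in\mathcal{V}}\exp z_{a'}}$. (i) For any fixed target action $a\in\mathcal{V}$, the SFT loss $\mathcal{L}_{\text{SFT}}(\boldsymbol{z})=-\log\pi_{\boldsymbol{z}}(a)$ is a convex function of $\boldsymbol{z}\in\mathbb{R}^{|\mathcal{V}|}$ (its Hessian in $\boldsymbol{z}$ is positive semi-definite everywhere). (ii) Fix a sampled action $a\in\mathcal{V}$, a behavioral probability $\pi_{\text{old}}(a)\in(0,1]$, an advantage value $A\neq 0$ and a clip range $\epsilon\in(0,1)$. Let $r(\boldsymbol{z})=\pi_{\boldsymbol{z}}(a)/\pi_{\text{old}}(a)$ and $$\mathcal{L}_{\text{PPO}}(\boldsymbol{z})=-\min\bigl(r(\boldsymbol{z})A,\ \mathrm{clip}(r(\boldsymbol{z}),1-\epsilon,1+\epsilon)A\bigr),$$ where $\mathrm{clip}(x,l,u)=\min(\max(x,l),u)$. Then $\mathcal{L}_{\text{PPO}}$ is not a convex function of $\boldsymbol{z}$: its Hessian with respect to $\boldsymbol{z}$ fails to be positive semi-definite at some points where it is twice differentiable.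
   Context: A loss taking logits $\boldsymbol{z}$ as input is called logits convex if its Hessian with respect to $\boldsymbol{z}$ is positive semi-definite. The losses here are the single-time-step versions of the SFT negative log-likelihood and the PPO clipped surrogate objective. *)

From HB Require Import structures.
From mathcomp Require Import all_boot all_order all_algebra.
From mathcomp Require Import all_classical all_reals all_analysis.
Set Implicit Arguments. Unset Strict Implicit. Unset Printing Implicit Defensive.
Import Order.TTheory GRing.Theory Num.Theory.
Import numFieldNormedType.Exports.
Local Open Scope ring_scope.

Definition softmax (R : realType) (n : nat) (z : 'rV[R]_n) (a : 'I_n) : R :=
  expR (z 0 a) / \sum_(b < n) expR (z 0 b).

Definition sft_loss (R : realType) (n : nat) (a : 'I_n) (z : 'rV[R]_n) : R :=
  - ln (softmax z a).

Definition clip (R : realType) (x l u : R) : R := Num.min (Num.max x l) u.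

Definition ppo_loss (R : realType) (n : nat) (a : 'I_n) (piold A eps : R)
    (z : 'rV[R]_n) : R :=
  let r := softmax z a / piold in
  - Num.min (r * A) (clip r (1 - eps) (1 + eps) * A).

Definition basis_vec (R : realType) (n : nat) (j : 'I_n) : 'rV[R]_n :=
  delta_mx 0 j.

Definition grad (R : realType) (n : nat) (f : 'rV[R]_n -> R) (z : 'rV[R]_n)
  : 'rV[R]_n := \row_j ('D_(basis_vec R j) f) z.

Definition hessian (R : realType) (n : nat) (f : 'rV[R]_n -> R) (z : 'rV[R]_n)
  : 'M[R]_n := \matrix_(i, j) ('D_(basis_vec R i) ('D_(basis_vec R j) f)) z.

Definition twice_differentiable (R : realType) (n : nat) (f : 'rV[R]_n -> R)
    (z : 'rV[R]_n) : Prop :=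
  (\forall x \near z, differentiable f x) /\ differentiable (grad f) z.

Definition psd (R : realType) (n : nat) (M : 'M[R]_n) : Prop :=
  forall v : 'rV[R]_n, 0 <= (v *m M *m v^T) 0 0.

(* The Hessian of -log softmax_a is diag(p) - p p^T with p = softmax z, the
   covariance matrix of the categorical distribution p, hence positive
   semi-definite.  For PPO, where the ratio lies strictly on the unclipped side
   (below 1 + eps if A > 0, above 1 - eps if A < 0), the loss coincides near z
   with -(A / piold) p_a, whose (a, a) second derivative is
   -(A / piold) p_a (1 - p_a) (1 - 2 p_a).  Logits with p_a < 1/2 (if A > 0) or
   p_a > 1/2 (if A < 0) inside that region make this diagonal entry negative. *)
From HB Require Import structures.
From mathcomp Require Import all_boot all_order all_algebra.
From mathcomp Require Import all_classical all_reals all_analysis.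
From mathcomp Require Import ring lra.
Set Implicit Arguments. Unset Strict Implicit. Unset Printing Implicit Defensive.
Import Order.TTheory GRing.Theory Num.Theory.
Import numFieldNormedType.Exports.
Local Open Scope ring_scope.

Section NearEq.
Variables (R : realType) (V W : normedModType R).

Lemma near0_differentiable (h : V -> W) x : {near x, h =1 0} ->
  differentiable h x.
Proof.
move=> h0.
have hx : h x = 0 by apply: nbhs_singleton h0.
have E : h \o shift x = cst (h x) + \0 +o_ 0 id.
  apply/eqaddoP => e e0 /=.
  rewrite (near_shift 0 x) in h0.
  move: h0; apply: filterS => y /=; rewrite subr0 => hy.
  by rewrite !fctE /= hx hy addr0 subr0 normr0 mulr_ge0 // ltW.
have dh0 : 'd h x = \0 :> (V -> W).
  by apply/diff_unique => //; exact: cst_continuous.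
by apply/diff_locallyP; rewrite dh0; split => //; exact: cst_continuous.
Qed.

Lemma near_eq_differentiable (f g : V -> W) x : {near x, f =1 g} ->
  differentiable f x -> differentiable g x.
Proof.
move=> fg df.
have -> : g = f + (g - f) by apply/funext => y; rewrite !fctE addrC subrK.
apply: differentiableD => //; apply: near0_differentiable.
by move: fg; apply: filterS => y fy; rewrite !fctE fy subrr.
Qed.

End NearEq.

Section Partials.
Variables (R : realType) (n : nat).
Implicit Types (f : 'rV[R]_n -> R) (x v z : 'rV[R]_n).

Lemma basis_vecE (i b : 'I_n) : basis_vec R i 0 b = (b == i)%:R.
Proof. by rewrite /basis_vec mxE eqxx. Qed.

Lemma sumr_delta (F : 'I_n -> R) i : \sum_(b < n) (b == i)%:R * F b = F i.
Proof. by under eq_bigr do rewrite mulr_natl mulrb; rewrite -big_mkcond big_pred1_eq. Qed.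

Lemma derive_coord x v j : 'D_v (fun y : 'rV[R]_n => y 0 j) x = v 0 j.
Proof.
have := @derive_mx R _ 1 n id x v (@derivable_id _ _ x v).
by rewrite derive_id => /(congr1 (fun M : 'M[R]_(1, n) => M 0 j)); rewrite mxE.
Qed.

Lemma twice_differentiable_near_eq f g z : {near z, f =1 g} ->
  twice_differentiable f z -> twice_differentiable g z /\ hessian f z = hessian g z.
Proof.
move=> fg [df dgradf].
have fg_near : \forall x \near z, {near x, f =1 g} := nbhs_interior fg.
have Dfg j : {near z, 'D_(basis_vec R j) f =1 'D_(basis_vec R j) g}.
  by move: fg_near; apply: filterS => x; exact: near_eq_derive.
split; first split.
- by apply: filterS2 fg_near df => x; exact: near_eq_differentiable.
- apply: near_eq_differentiable dgradf; move: fg_near; apply: filterS => x fgx.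
  by apply/rowP => j; rewrite !mxE; exact: near_eq_derive.
- by apply/matrixP => i j; rewrite !mxE; apply: near_eq_derive; exact: Dfg.
Qed.

Lemma twice_differentiable_partials f (d : 'I_n -> 'rV[R]_n -> R) z :
  (forall x, differentiable f x) -> (forall j, 'D_(basis_vec R j) f = d j) ->
  (forall j, differentiable (d j) z) ->
  twice_differentiable f z /\
  hessian f z = \matrix_(i, j) 'D_(basis_vec R i) (d j) z.
Proof.
move=> df Df dd; split; last by apply/matrixP => i j; rewrite !mxE Df.
split; first exact: filterE.
have -> : grad f = \sum_(j < n) (fun x => d j x *: basis_vec R j).
  rewrite fct_sumE; apply/funext => x; rewrite [LHS]row_sum_delta.
  by apply: eq_bigr => j _; rewrite mxE -Df.
by apply: differentiable_sum => j; exact: differentiableZl.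
Qed.

Lemma quad_formE (M : 'M[R]_n) v :
  (v *m M *m v^T) 0 0 = \sum_i \sum_j v 0 i * M i j * v 0 j.
Proof.
rewrite mxE [RHS]exchange_big; apply: eq_bigr => j _.
by rewrite !mxE mulr_suml.
Qed.

Lemma psd_diag_ge0 (M : 'M[R]_n) i : psd M -> 0 <= M i i.
Proof. by move=> /(_ (basis_vec R i)); rewrite /basis_vec -rowE trmx_delta -colE !mxE. Qed.

Lemma psd_covariance (p : 'I_n -> R) : (forall i, 0 <= p i) -> \sum_i p i = 1 ->
  psd (\matrix_(i, j) (p j * ((i == j)%:R - p i))).
Proof.
move=> p_ge0 p_sum1 v; rewrite quad_formE.
set m := \sum_j p j * v 0 j.
have row_sum i : \sum_j v 0 i * (\matrix_(i, j) (p j * ((i == j)%:R - p i))) i j * v 0 j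
    = p i * v 0 i * v 0 i - v 0 i * p i * m.
  under eq_bigr => j _ do rewrite mxE.
  transitivity (\sum_j ((j == i)%:R * (p j * v 0 i * v 0 j) - v 0 i * p i * (p j * v 0 j))).
    by apply: eq_bigr => j _; rewrite eq_sym; ring.
  by rewrite sumrB sumr_delta -mulr_sumr.
have complete_square i : p i * v 0 i * v 0 i - v 0 i * p i * m
    = p i * (v 0 i - m) ^+ 2 + m * (p i * v 0 i - m * p i) by ring.
under eq_bigr do rewrite row_sum complete_square.
rewrite big_split /= -mulr_sumr sumrB -mulr_sumr p_sum1 mulr1 subrr mulr0 addr0.
by apply: sumr_ge0 => i _; rewrite mulr_ge0 ?sqr_ge0.
Qed.

End Partials.

Lemma derive_comp1 (R : realType) (V : normedModType R) (g : V -> R)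
    (h : R -> R) x v :
  differentiable g x -> differentiable h (g x) ->
  'D_v (h \o g) x = 'D_v g x * h^`()%classic (g x).
Proof.
move=> dg dh; rewrite deriveE; last exact: differentiable_comp.
by rewrite diff_comp // /= diff1E // -deriveE.
Qed.

Section Softmax.
Variables (R : realType) (n : nat).
Hypothesis n_gt0 : (0 < n)%N.
Implicit Types (x v z : 'rV[R]_n).

Definition sumexp x : R := \sum_(b < n) expR (x 0 b).

Lemma sumexp_gt0 x : 0 < sumexp x.
Proof.
rewrite /sumexp (bigD1 (Ordinal n_gt0)) //= ltr_pwDl ?expR_gt0 //.
by apply: sumr_ge0 => i _; rewrite ltW ?expR_gt0.
Qed.

Lemma softmax_gt0 x j : 0 < softmax x j.
Proof. by rewrite divr_gt0 ?expR_gt0 ?sumexp_gt0. Qed.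

Lemma sum_softmax x : \sum_(b < n) softmax x b = 1.
Proof. by rewrite -mulr_suml divff // gt_eqF ?sumexp_gt0. Qed.

Lemma differentiable_expR_coord x j :
  differentiable (fun y : 'rV[R]_n => expR (y 0 j)) x.
Proof.
apply: (differentiable_comp (differentiable_coord _ _ _)).
exact/derivable1_diffP/derivable_expR.
Qed.

Lemma derive_expR_coord x v j :
  'D_v (fun y : 'rV[R]_n => expR (y 0 j)) x = v 0 j * expR (x 0 j).
Proof.
rewrite (@derive_comp1 _ _ (fun y : 'rV[R]_n => y 0 j) expR).
- by rewrite derive_coord derive1E derive_val.
- exact: differentiable_coord.
- exact/derivable1_diffP/derivable_expR.
Qed.

Lemma sumexpE : sumexp = \sum_(b < n) (fun y : 'rV[R]_n => expR (y 0 b)).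
Proof. by rewrite fct_sumE. Qed.

Lemma differentiable_sumexp x : differentiable sumexp x.
Proof. by rewrite sumexpE; apply: differentiable_sum => j; exact: differentiable_expR_coord. Qed.

Lemma derive_sumexp x v : 'D_v sumexp x = \sum_(b < n) v 0 b * expR (x 0 b).
Proof.
rewrite sumexpE derive_sum; last by move=> j; apply/diff_derivable/differentiable_expR_coord.
by apply: eq_bigr => j _; rewrite derive_expR_coord.
Qed.

Lemma softmaxE j : (fun y : 'rV[R]_n => softmax y j) =
  (fun y : 'rV[R]_n => expR (y 0 j)) * (fun y => (sumexp y)^-1).
Proof. by []. Qed.

Lemma differentiable_softmax j x : differentiable (fun y : 'rV[R]_n => softmax y j) x.
Proof.
rewrite softmaxE; apply: differentiableM; first exact: differentiable_expR_coord.
by apply: differentiableV; rewrite ?gt_eqF ?sumexp_gt0 //; exact: differentiable_sumexp.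
Qed.

Lemma derive_softmax j x v : 'D_v (fun y : 'rV[R]_n => softmax y j) x =
  softmax x j * (v 0 j - \sum_(b < n) v 0 b * softmax x b).
Proof.
have S0 : sumexp x != 0 by rewrite gt_eqF ?sumexp_gt0.
rewrite softmaxE deriveM; last 2 first.
- exact/diff_derivable/differentiable_expR_coord.
- by apply/diff_derivable/differentiableV => //; exact: differentiable_sumexp.
rewrite deriveV //; last exact/diff_derivable/differentiable_sumexp.
rewrite derive_sumexp derive_expR_coord /softmax -/(sumexp x).
have -> : \sum_(b < n) v 0 b * (expR (x 0 b) / sumexp x) =
    (\sum_(b < n) v 0 b * expR (x 0 b)) / sumexp x.
  by rewrite mulr_suml; apply: eq_bigr => b _; rewrite mulrA.
by rewrite /GRing.scale /=; field.
Qed.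

Lemma partial_softmax i j x :
  'D_(basis_vec R i) (fun y : 'rV[R]_n => softmax y j) x =
  softmax x j * ((i == j)%:R - softmax x i).
Proof.
rewrite derive_softmax basis_vecE eq_sym.
by under eq_bigr do rewrite basis_vecE; rewrite sumr_delta.
Qed.

End Softmax.

Section SFT.
Variables (R : realType) (n : nat).
Hypothesis n_gt0 : (0 < n)%N.
Implicit Types (a : 'I_n) (x z : 'rV[R]_n).

Lemma sft_lossE a : sft_loss a = (@ln R \o @sumexp R n) - (fun y : 'rV[R]_n => y 0 a).
Proof.
apply/funext => y; rewrite !fctE /sft_loss /softmax -/(sumexp y).
by rewrite ln_div ?posrE ?expR_gt0 ?sumexp_gt0 // expRK opprB.
Qed.

Lemma differentiable_ln_sumexp x : differentiable (@ln R \o @sumexp R n) x.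
Proof.
apply: differentiable_comp; first exact: differentiable_sumexp.
by apply/derivable1_diffP; have [] := is_derive1_ln (sumexp_gt0 n_gt0 x).
Qed.

Lemma differentiable_sft_loss a x : differentiable (sft_loss a) x.
Proof.
rewrite sft_lossE; apply: differentiableB; first exact: differentiable_ln_sumexp.
exact: differentiable_coord.
Qed.

Lemma partial_sft_loss a j :
  'D_(basis_vec R j) (sft_loss a) = fun x => softmax x j - (j == a)%:R.
Proof.
apply/funext => x; have S_gt0 := sumexp_gt0 n_gt0 x.
rewrite sft_lossE deriveB; last 2 first.
- exact/diff_derivable/differentiable_ln_sumexp.
- exact/diff_derivable/differentiable_coord.
have [ln_derivable ln_derive] := is_derive1_ln S_gt0.
rewrite derive_comp1; first last.
- exact/derivable1_diffP.
- exact: differentiable_sumexp.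
rewrite derive_coord basis_vecE derive_sumexp derive1E ln_derive eq_sym.
by under eq_bigr do rewrite basis_vecE; rewrite sumr_delta.
Qed.

Lemma hessian_sft_loss a z :
  twice_differentiable (sft_loss a) z /\
  hessian (sft_loss a) z =
    \matrix_(i, j) (softmax z j * ((i == j)%:R - softmax z i)).
Proof.
have partials_differentiable j :
    differentiable (fun x => softmax x j - (j == a)%:R) z.
  by apply: differentiableB => //; exact: differentiable_softmax.
have [twice ->] := twice_differentiable_partials (differentiable_sft_loss a)
  (partial_sft_loss a) partials_differentiable.
split => //; apply/matrixP => i j; rewrite !mxE.
rewrite (_ : (fun x => _) = (fun x => softmax x j) - cst (j == a)%:R) //.
rewrite deriveB ?derive_cst ?subr0 ?partial_softmax //.
exact/diff_derivable/differentiable_softmax.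
Qed.

Lemma sft_loss_convex a z :
  twice_differentiable (sft_loss a) z /\ psd (hessian (sft_loss a) z).
Proof.
have [twice ->] := hessian_sft_loss a z; split => //.
apply: psd_covariance; last exact: sum_softmax.
by move=> i; rewrite ltW ?softmax_gt0.
Qed.

End SFT.

Lemma min_unclipped (R : realType) (r A l u : R) :
  (0 < A -> r <= u) -> (A < 0 -> l <= r) ->
  Num.min (r * A) (clip r l u * A) = r * A.
Proof.
move=> r_le_u l_le_r; apply: min_l.
have [A_lt0|A_gt0|->] := ltrgtP A 0; last by rewrite !mulr0.
- have : clip r l u <= r by rewrite /clip ge_min ge_max lexx l_le_r.
  by move: A_lt0; nra.
- have : r <= clip r l u by rewrite /clip le_min le_max lexx r_le_u.
  by move: A_gt0; nra.
Qed.

Section PPO.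
Variables (R : realType) (n : nat).
Hypothesis n_gt0 : (0 < n)%N.
Implicit Types (a : 'I_n) (z : 'rV[R]_n).

Lemma hessian_scaled_softmax (k : R) a z :
  twice_differentiable (fun y => k * softmax y a) z /\
  hessian (fun y => k * softmax y a) z a a =
    k * (softmax z a * (1 - softmax z a) * (1 - 2 * softmax z a)).
Proof.
pose p j := fun y : 'rV[R]_n => softmax y j.
have dp j x v : derivable (p j) x v.
  exact/diff_derivable/differentiable_softmax.
pose d j := k \*o (p a * (cst (j == a)%:R - p j)).
have df x : differentiable (fun y => k * softmax y a) x.
  have -> : (fun y => k * softmax y a) = cst k * p a by [].
  by apply: differentiableM => //; exact: differentiable_softmax.
have partials j : 'D_(basis_vec R j) (fun y => k * softmax y a) = d j.
  apply/funext => x; rewrite (_ : (fun y => _) = k \*o p a) //.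
  by rewrite deriveMl ?partial_softmax.
have dd j : differentiable (d j) z.
  have -> : d j = cst k * (p a * (cst (j == a)%:R - p j)) by [].
  apply: differentiableM => //; apply: differentiableM; first exact: differentiable_softmax.
  by apply: differentiableB => //; exact: differentiable_softmax.
have [twice ->] := twice_differentiable_partials df partials dd.
split => //; rewrite mxE /d eqxx deriveMl; last first.
  by apply: derivableM => //; apply: derivableB => //; exact: derivable_cst.
rewrite deriveM //; last by apply: derivableB => //; exact: derivable_cst.
rewrite deriveB ?derive_cst; [|exact: derivable_cst|exact: dp].
rewrite partial_softmax //; rewrite eqxx /p /GRing.scale !fctE /=.
ring.
Qed.

Lemma ppo_loss_near_eq a (piold A eps : R) z : 0 < piold ->
  (0 < A -> softmax z a < piold * (1 + eps)) ->
  (A < 0 -> piold * (1 - eps) < softmax z a) ->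
  {near z, (fun y => - (A / piold) * softmax y a) =1 ppo_loss a piold A eps}.
Proof.
move=> piold_gt0 below above.
have softmax_cont := differentiable_continuous (differentiable_softmax n_gt0 a z).
have unclipped : \forall y \near z, (0 < A -> softmax y a < piold * (1 + eps)) /\
    (A < 0 -> piold * (1 - eps) < softmax y a).
  have [A_lt0|A_gt0|_] := ltrgtP A 0.
  - by apply: filterS (cvgr_gt _ softmax_cont _ (above A_lt0)).
  - by apply: filterS (cvgr_lt _ softmax_cont _ (below A_gt0)).
  - exact: filterE.
apply: filterS unclipped => y [below_y above_y].
rewrite /ppo_loss min_unclipped; first ring.
- by move=> /below_y /ltW; rewrite mulrC -ler_pdivrMr.
- by move=> /above_y /ltW; rewrite mulrC -ler_pdivlMr.
Qed.

Lemma ppo_loss_hessian_not_psd a (piold A eps : R) z : 0 < piold ->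
  (0 < A -> softmax z a < piold * (1 + eps)) ->
  (A < 0 -> piold * (1 - eps) < softmax z a) ->
  softmax z a < 1 -> 0 < A * (1 - 2 * softmax z a) ->
  twice_differentiable (ppo_loss a piold A eps) z /\
  ~ psd (hessian (ppo_loss a piold A eps) z).
Proof.
move=> piold_gt0 below above p_lt1 curv.
have [twice_model hessian_aa] := hessian_scaled_softmax (- (A / piold)) a z.
have [twice <-] := twice_differentiable_near_eq
  (ppo_loss_near_eq piold_gt0 below above) twice_model.
split => // /(psd_diag_ge0 a); rewrite hessian_aa; apply/negP; rewrite -ltNge.
set p := softmax z a in p_lt1 curv *.
have p_gt0 : 0 < p := softmax_gt0 n_gt0 z a.
have -> : - (A / piold) * (p * (1 - p) * (1 - 2 * p)) =
    - (p * (1 - p) / piold * (A * (1 - 2 * p))) by ring.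
by rewrite oppr_lt0 mulr_gt0 // divr_gt0 // mulr_gt0 // subr_gt0.
Qed.

End PPO.

(* e^{z_a} : (n - 1) = s : (1 - s), all other logits being 0. *)
Lemma softmax_onto (R : realType) (n : nat) (a : 'I_n) (s : R) :
  (1 < n)%N -> 0 < s < 1 -> exists z : 'rV[R]_n, softmax z a = s.
Proof.
move=> n_gt1 /andP[s_gt0 s_lt1].
have m_gt0 : 0 < (n.-1)%:R :> R by rewrite ltr0n -subn1 subn_gt0.
exists (\row_j if j == a then ln (s * (n.-1)%:R / (1 - s)) else 0).
rewrite /softmax (bigD1 a) //= !mxE eqxx.
under eq_bigr => b b_neq_a do rewrite mxE (negbTE b_neq_a) expR0.
rewrite sumr_const cardC1 card_ord lnK ?posrE ?divr_gt0 ?mulr_gt0 ?subr_gt0 //.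
field; have -> : s * (n.-1)%:R + (n.-1)%:R * (1 - s) = (n.-1)%:R by ring.
by rewrite subr_eq0 !gt_eqF.
Qed.

Theorem lemma4p5 (R : realType) (n : nat) (hn : (2 <= n)%N) :
  (* (i) SFT loss is logits convex *)
  (forall (a : 'I_n) (z : 'rV[R]_n),
      twice_differentiable (sft_loss a) z /\ psd (hessian (sft_loss a) z)) /\
  (* (ii) PPO loss is not logits convex *)
  (forall (a : 'I_n) (piold A eps : R),
      0 < piold <= 1 -> A != 0 -> 0 < eps < 1 ->
      exists z : 'rV[R]_n,
        twice_differentiable (ppo_loss a piold A eps) z /\
        ~ psd (hessian (ppo_loss a piold A eps) z)).
Proof.
have n_gt0 : (0 < n)%N by apply: leq_trans hn.
split; first exact: sft_loss_convex.
move=> a piold A eps /andP[piold_gt0 piold_le1] A_neq0 /andP[eps_gt0 eps_lt1].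
suff [s [s_bounds below above curv]] : exists s : R, [/\ 0 < s < 1,
    0 < A -> s < piold * (1 + eps), A < 0 -> piold * (1 - eps) < s &
    0 < A * (1 - 2 * s)].
  have [z pz] := softmax_onto a hn s_bounds.
  exists z; apply: ppo_loss_hessian_not_psd; rewrite ?pz //.
  by case/andP: s_bounds.
move: A_neq0; rewrite neq_lt => /orP[A_lt0|A_gt0].
- have q_gt0 : 0 < piold * (1 - eps) by rewrite mulr_gt0 // subr_gt0.
  have q_lt1 : piold * (1 - eps) < 1 by nra.
  exists ((1 + piold * (1 - eps)) / 2); split; nra.
- exists (piold / 4); split; nra.
Qed.
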